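(* Let $\mathcal{C}$ be a circle and $\mathcal{D}$ a central conic (an ellipse or a hyperbola) such that at least one nondegenerate triangle inscribed in $\mathcal{C}$ is circumscribed about $\mathcal{D}$. Let $\mathcal{P}$ be the family of all nondegenerate triangles inscribed in $\mathcal{C}$ and circumscribed about $\mathcal{D}$. Then $\mathcal{P}$ contains at most two right triangles.
   Context: A central conic is a non-degenerate ellipse (possibly a circle) or hyperbola with a center of symmetry. A triangle is circumscribed about a conic if each of its three sidelines is tangent to the conic. A triangle is inscribed in a circle if its vertices lie on it. A triangle is nondegenerate if its vertices are not collinear. *)

From Stdlib Require Import Reals.
Open Scope R_scope.

Definition point := (R * R)%type.

Definition px (p : point) : R := fst p.
Definition py (p : point) : R := snd p.

Definition on_circle (o : point) (r : R) (p : point) : Prop :=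
  (px p - px o)^2 + (py p - py o)^2 = r^2.

(* A conic with center (cx,cy) given by the equation
   a u^2 + 2 b u v + d v^2 = 1, where u = x - cx, v = y - cy. *)
Record conic := Conic { cx : R; cy : R; ca : R; cb : R; cd : R }.

Definition conic_form (K : conic) (p : point) : R :=
  let u := px p - cx K in let v := py p - cy K in
  ca K * u^2 + 2 * cb K * u * v + cd K * v^2.

Definition on_conic (K : conic) (p : point) : Prop := conic_form K p = 1.

Definition is_ellipse (K : conic) : Prop :=
  ca K * cd K - cb K ^ 2 > 0 /\ ca K > 0.
Definition is_hyperbola (K : conic) : Prop :=
  ca K * cd K - cb K ^ 2 < 0.
Definition central_conic (K : conic) : Prop := is_ellipse K \/ is_hyperbola K.

(* Gradient of the quadratic form at p (up to the factor 2). *)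
Definition grad_x (K : conic) (p : point) : R :=
  ca K * (px p - cx K) + cb K * (py p - cy K).
Definition grad_y (K : conic) (p : point) : R :=
  cb K * (px p - cx K) + cd K * (py p - cy K).

Definition cross (A B C : point) : R :=
  (px B - px A) * (py C - py A) - (py B - py A) * (px C - px A).

Definition collinear (A B C : point) : Prop := cross A B C = 0.

Definition line_tangent (K : conic) (P Q : point) : Prop :=
  P <> Q /\
  exists T : point, on_conic K T /\ collinear P Q T /\
    grad_x K T * (px Q - px P) + grad_y K T * (py Q - py P) = 0.

Definition nondegenerate (A B C : point) : Prop := ~ collinear A B C.

Definition inscribed_in_circle (o : point) (r : R) (A B C : point) : Prop :=
  on_circle o r A /\ on_circle o r B /\ on_circle o r C.

Definition circumscribed_about (K : conic) (A B C : point) : Prop :=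
  line_tangent K A B /\ line_tangent K B C /\ line_tangent K C A.

Definition poncelet_triangle (o : point) (r : R) (K : conic) (A B C : point)
  : Prop :=
  nondegenerate A B C /\ inscribed_in_circle o r A B C /\
  circumscribed_about K A B C.

Definition dot (A B C : point) : R :=
  (px B - px A) * (px C - px A) + (py B - py A) * (py C - py A).

Definition right_triangle (A B C : point) : Prop :=
  dot A B C = 0 \/ dot B C A = 0 \/ dot C A B = 0.

Definition same_triangle (A B C A' B' C' : point) : Prop :=
  forall X : point, (X = A \/ X = B \/ X = C) <-> (X = A' \/ X = B' \/ X = C').

From Stdlib Require Import Reals Lra Psatz.
Open Scope R_scope.

(* By Thales' theorem the hypotenuse of a right triangle inscribed in the
   circle is a diameter, i.e. a tangent of the conic through the centre o.
   For lines through a fixed point, tangency to a central conic is the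
   vanishing of a nonzero binary quadratic form in the direction, so at most
   two directions through o are tangent: two of any three right triangles
   have parallel diameters as hypotenuses, hence the same two endpoints.
   The third vertex is then determined too: the same argument at a vertex P
   leaves a single second tangent from P, which meets the circle in a single
   point other than P. *)

Lemma sum_sq_eq0 (x y : R) : x^2 + y^2 = 0 -> x = 0 /\ y = 0.
Proof. intros H; split; nra. Qed.

Lemma point_eq (P Q : point) : px P = px Q -> py P = py Q -> P = Q.
Proof. destruct P, Q; unfold px, py; simpl; intros -> ->; reflexivity. Qed.

Lemma dist2_neq0 (P Q : point) : P <> Q -> (px Q - px P)^2 + (py Q - py P)^2 <> 0.
Proof.
  intros Hne Hz; apply sum_sq_eq0 in Hz as [Hx Hy].
  apply Hne, point_eq; lra.
Qed.

Lemma parallel_scalar (u v a b : R) :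
  u^2 + v^2 <> 0 -> u * b - v * a = 0 -> exists s, a = s * u /\ b = s * v.
Proof.
  intros Hn Hc; exists ((a*u + b*v) / (u^2 + v^2)); split.
  - assert (E : (a*u + b*v) / (u^2 + v^2) * u = a + v * (u*b - v*a) / (u^2 + v^2))
      by (field; exact Hn).
    rewrite E, Hc; unfold Rdiv; ring.
  - assert (E : (a*u + b*v) / (u^2 + v^2) * v = b - u * (u*b - v*a) / (u^2 + v^2))
      by (field; exact Hn).
    rewrite E, Hc; unfold Rdiv; ring.
Qed.

Lemma orthogonal_to_independent_zero (m1 m2 p1 p2 q1 q2 : R) :
  m1 * p1 + m2 * p2 = 0 -> m1 * q1 + m2 * q2 = 0 -> p1 * q2 - p2 * q1 <> 0 ->
  m1 = 0 /\ m2 = 0.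
Proof.
  intros Hp Hq Hn.
  assert (E1 : m1 * (p1 * q2 - p2 * q1) = q2 * (m1*p1 + m2*p2) - p2 * (m1*q1 + m2*q2))
    by ring.
  assert (E2 : m2 * (p1 * q2 - p2 * q1) = p1 * (m1*q1 + m2*q2) - q1 * (m1*p1 + m2*p2))
    by ring.
  rewrite Hp, Hq in E1, E2.
  split; apply (Rmult_eq_reg_r (p1 * q2 - p2 * q1)); try lra; assumption.
Qed.

Lemma parallel_same_norm (h1 h2 v1 v2 : R) :
  v1^2 + v2^2 = h1^2 + h2^2 -> h1 * v2 - h2 * v1 = 0 ->
  (v1 = h1 /\ v2 = h2) \/ (v1 = - h1 /\ v2 = - h2).
Proof.
  intros Hn Hc.
  assert (E : ((v1 - h1)^2 + (v2 - h2)^2) * ((v1 + h1)^2 + (v2 + h2)^2)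
              = ((v1^2 + v2^2) - (h1^2 + h2^2))^2 + (2 * (h1*v2 - h2*v1))^2) by ring.
  rewrite Hn, Hc in E.
  assert (F : ((v1 - h1)^2 + (v2 - h2)^2) * ((v1 + h1)^2 + (v2 + h2)^2) = 0)
    by (rewrite E; ring).
  apply Rmult_integral in F as [F | F]; apply sum_sq_eq0 in F as [F1 F2];
    [left | right]; split; lra.
Qed.

Definition bform (a b c x y : R) : R := a * x^2 + 2 * b * x * y + c * y^2.

Lemma bform_three_zeros (a b c x1 y1 x2 y2 x3 y3 : R) :
  bform a b c x1 y1 = 0 -> bform a b c x2 y2 = 0 -> bform a b c x3 y3 = 0 ->
  x1 * y2 - y1 * x2 <> 0 -> x1 * y3 - y1 * x3 <> 0 -> x2 * y3 - y2 * x3 <> 0 ->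
  a = 0 /\ b = 0 /\ c = 0.
Proof.
  intros H1 H2 H3 N12 N13 N23.
  set (D12 := x1 * y2 - y1 * x2) in N12.
  set (D13 := x1 * y3 - y1 * x3) in N13.
  set (D23 := x2 * y3 - y2 * x3) in N23.
  assert (ND : D12 * D13 * D23 <> 0)
    by (repeat apply Rmult_integral_contrapositive_currified; assumption).
  (* Cramer's rule for the 3x3 system in (a, b, c). *)
  assert (Ea : a * (D12 * D13 * D23) =
    bform a b c x1 y1 * (y2*y3*D23) - bform a b c x2 y2 * (y1*y3*D13)
    + bform a b c x3 y3 * (y1*y2*D12)) by (unfold bform, D12, D13, D23; ring).
  assert (Eb : 2 * b * (D12 * D13 * D23) =
    - bform a b c x1 y1 * ((x2*y3 + x3*y2)*D23) + bform a b c x2 y2 * ((x1*y3 + x3*y1)*D13)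
    - bform a b c x3 y3 * ((x1*y2 + x2*y1)*D12)) by (unfold bform, D12, D13, D23; ring).
  assert (Ec : c * (D12 * D13 * D23) =
    bform a b c x1 y1 * (x2*x3*D23) - bform a b c x2 y2 * (x1*x3*D13)
    + bform a b c x3 y3 * (x1*x2*D12)) by (unfold bform, D12, D13, D23; ring).
  rewrite H1, H2, H3 in Ea, Eb, Ec.
  repeat split; apply (Rmult_eq_reg_r (D12 * D13 * D23)); try lra; assumption.
Qed.

Lemma central_conic_det_neq0 (K : conic) :
  central_conic K -> ca K * cd K - cb K ^ 2 <> 0.
Proof. unfold central_conic, is_ellipse, is_hyperbola; intros [[H _] | H]; lra. Qed.

(* The line X + t (u, v) meets K where
   bform (ca K) (cb K) (cd K) u v * t^2 + 2 (grad K X . (u, v)) t + conic_form K X - 1 = 0;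
   tangent_disc is the quarter discriminant of this quadratic in t. *)
Definition tangent_disc (K : conic) (X : point) (u v : R) : R :=
  (grad_x K X * u + grad_y K X * v)^2
  - bform (ca K) (cb K) (cd K) u v * (conic_form K X - 1).

Lemma tangent_disc_shift (K : conic) (X : point) (u v s : R) :
  tangent_disc K (px X + s * u, py X + s * v) u v = tangent_disc K X u v.
Proof. unfold tangent_disc, grad_x, grad_y, conic_form, bform, px, py; simpl; ring. Qed.

Lemma tangent_disc_at_contact (K : conic) (T : point) (u v : R) :
  on_conic K T -> grad_x K T * u + grad_y K T * v = 0 -> tangent_disc K T u v = 0.
Proof. unfold on_conic, tangent_disc; intros HT Hg; rewrite HT, Hg; ring. Qed.

Lemma line_tangent_disc (K : conic) (P Q X : point) :
  line_tangent K P Q -> collinear P Q X ->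
  tangent_disc K X (px Q - px P) (py Q - py P) = 0.
Proof.
  intros [Hne [T [HT [HPQT Hg]]]] HPQX.
  unfold collinear, cross in HPQT, HPQX.
  destruct (parallel_scalar (px Q - px P) (py Q - py P) (px T - px X) (py T - py X))
    as [s [Ex Ey]]; [exact (dist2_neq0 P Q Hne) | lra |].
  assert (ET : T = (px X + s * (px Q - px P), py X + s * (py Q - py P)))
    by (apply point_eq; simpl; lra).
  rewrite <- (tangent_disc_shift K X _ _ s), <- ET.
  exact (tangent_disc_at_contact K T _ _ HT Hg).
Qed.

Lemma tangent_disc_bform (K : conic) (X : point) (u v : R) :
  let k := conic_form K X - 1 in
  tangent_disc K X u v =
  bform (grad_x K X ^ 2 - k * ca K) (grad_x K X * grad_y K X - k * cb K)
        (grad_y K X ^ 2 - k * cd K) u v.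
Proof. unfold tangent_disc, bform; ring. Qed.

Lemma conic_form_euler (K : conic) (X : point) :
  conic_form K X = (px X - cx K) * grad_x K X + (py X - cy K) * grad_y K X.
Proof. unfold conic_form, grad_x, grad_y; ring. Qed.

Lemma tangent_disc_coeffs_neq0 (K : conic) (X : point) :
  ca K * cd K - cb K ^ 2 <> 0 ->
  let k := conic_form K X - 1 in
  ~ (grad_x K X ^ 2 - k * ca K = 0 /\ grad_x K X * grad_y K X - k * cb K = 0 /\
     grad_y K X ^ 2 - k * cd K = 0).
Proof.
  (* The coefficients would give k^2 det = 0, so k = 0 and grad K X = 0,
     contradicting Euler's identity conic_form K X = (X - c) . grad K X. *)
  intros Hdet k [Ha [Hb Hd]].
  set (g1 := grad_x K X) in Ha, Hb.
  set (g2 := grad_y K X) in Hb, Hd.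
  assert (Hk2 : (k * k) * (ca K * cd K - cb K ^ 2) = 0).
  { replace ((k * k) * (ca K * cd K - cb K ^ 2))
      with ((k * ca K) * (k * cd K) - (k * cb K) * (k * cb K)) by ring.
    replace (k * ca K) with (g1 ^ 2) by lra.
    replace (k * cd K) with (g2 ^ 2) by lra.
    replace (k * cb K) with (g1 * g2) by lra. ring. }
  assert (Hk : k = 0).
  { apply Rmult_integral in Hk2 as [Hk2 | Hk2]; [|contradiction].
    apply Rmult_integral in Hk2 as [Hk2 | Hk2]; exact Hk2. }
  rewrite Hk in Ha, Hd.
  assert (Hg1 : g1 = 0) by nra.
  assert (Hg2 : g2 = 0) by nra.
  pose proof (conic_form_euler K X) as E.
  fold g1 g2 in E; rewrite Hg1, Hg2 in E.
  unfold k in Hk; lra.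
Qed.

Lemma tangent_disc_three_zeros (K : conic) (X : point) (u1 v1 u2 v2 u3 v3 : R) :
  ca K * cd K - cb K ^ 2 <> 0 ->
  tangent_disc K X u1 v1 = 0 -> tangent_disc K X u2 v2 = 0 ->
  tangent_disc K X u3 v3 = 0 ->
  u1 * v2 - v1 * u2 = 0 \/ u1 * v3 - v1 * u3 = 0 \/ u2 * v3 - v2 * u3 = 0.
Proof.
  intros Hdet H1 H2 H3.
  destruct (Req_dec (u1 * v2 - v1 * u2) 0) as [|N12]; [now left|].
  destruct (Req_dec (u1 * v3 - v1 * u3) 0) as [|N13]; [now right; left|].
  destruct (Req_dec (u2 * v3 - v2 * u3) 0) as [|N23]; [now right; right|].
  exfalso; apply (tangent_disc_coeffs_neq0 K X Hdet).
  rewrite tangent_disc_bform in H1, H2, H3.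
  exact (bform_three_zeros _ _ _ _ _ _ _ _ _ H1 H2 H3 N12 N13 N23).
Qed.

Definition is_midpoint (M P Q : point) : Prop :=
  px P + px Q = 2 * px M /\ py P + py Q = 2 * py M.

Lemma midpoint_collinear (M P Q : point) : is_midpoint M P Q -> collinear P Q M.
Proof.
  intros [Hx Hy]; unfold collinear, cross.
  replace (px M) with ((px P + px Q) / 2) by lra.
  replace (py M) with ((py P + py Q) / 2) by lra.
  field.
Qed.

Lemma thales_midpoint (o : point) (r : R) (A B C : point) :
  on_circle o r A -> on_circle o r B -> on_circle o r C ->
  dot A B C = 0 -> nondegenerate A B C -> is_midpoint o B C.
Proof.
  unfold on_circle, dot, nondegenerate, collinear, cross, is_midpoint.
  intros HA HB HC Hd Hnd.
  (* B + C - 2 o is orthogonal to C - B (as |OB| = |OC|) and to 2 A - B - C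
     (by the right angle at A); these two vectors are independent. *)
  destruct (orthogonal_to_independent_zero
              (px B + px C - 2 * px o) (py B + py C - 2 * py o)
              (px C - px B) (py C - py B)
              (2 * px A - px B - px C) (2 * py A - py B - py C)) as [E1 E2].
  - lra.
  - lra.
  - intro Hc; apply Hnd; lra.
  - split; lra.
Qed.

Lemma circle_secant_unique (o : point) (r : R) (P R R' : point) :
  on_circle o r P -> on_circle o r R -> on_circle o r R' ->
  R <> P -> R' <> P -> collinear P R R' -> R = R'.
Proof.
  unfold on_circle, collinear, cross; intros HP HR HR' NR NR' Hc.
  destruct (parallel_scalar (px R - px P) (py R - py P) (px R' - px P) (py R' - py P))
    as [t [Ex Ey]]; [exact (dist2_neq0 P R (not_eq_sym NR)) | lra |].
  set (w := (px R - px P)^2 + (py R - py P)^2).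
  assert (Hw : w <> 0) by exact (dist2_neq0 P R (not_eq_sym NR)).
  (* Both R and R' = P + t (R - P) solve |P + t (R - P) - o|^2 = |P - o|^2,
     a quadratic in t with roots 0 and 1. *)
  assert (Ht : t * (t - 1) * w = 0).
  { replace (px R') with (px P + t * (px R - px P)) in HR' by lra.
    replace (py R') with (py P + t * (py R - py P)) in HR' by lra.
    assert (E : t * (t - 1) * w =
      ((px P + t * (px R - px P) - px o)^2 + (py P + t * (py R - py P) - py o)^2
       - ((px P - px o)^2 + (py P - py o)^2))
      - t * ((px R - px o)^2 + (py R - py o)^2 - ((px P - px o)^2 + (py P - py o)^2)))
      by (unfold w; ring).
    rewrite E, HR', HR, HP; ring. }
  apply Rmult_integral in Ht as [Ht | Ht]; [|contradiction].
  apply Rmult_integral in Ht as [Ht | Ht].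
  - exfalso; apply NR', point_eq; subst t; lra.
  - apply point_eq; assert (t = 1) by lra; subst t; lra.
Qed.

Lemma circle_parallel_diameters (o : point) (r : R) (P Q P' Q' : point) :
  on_circle o r Q -> on_circle o r P' -> is_midpoint o P Q -> is_midpoint o P' Q' ->
  (px Q - px P) * (py Q' - py P') - (py Q - py P) * (px Q' - px P') = 0 ->
  (P' = P /\ Q' = Q) \/ (P' = Q /\ Q' = P).
Proof.
  unfold on_circle, is_midpoint; intros HQ HP' [Mx My] [Mx' My'] Hpar.
  destruct (parallel_same_norm (px Q - px o) (py Q - py o) (px P' - px o) (py P' - py o))
    as [[E1 E2] | [E1 E2]].
  - lra.
  - replace (px Q - px o) with ((px Q - px P) / 2) by lra.
    replace (py Q - py o) with ((py Q - py P) / 2) by lra.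
    replace (px P' - px o) with (- (px Q' - px P') / 2) by lra.
    replace (py P' - py o) with (- (py Q' - py P') / 2) by lra.
    lra.
  - right; split; apply point_eq; lra.
  - left; split; apply point_eq; lra.
Qed.

Lemma line_tangent_sym (K : conic) (P Q : point) :
  line_tangent K P Q -> line_tangent K Q P.
Proof.
  intros [Hne [T [HT [Hc Hg]]]]; split; [now apply not_eq_sym|].
  exists T; split; [exact HT|]; split.
  - unfold collinear, cross in *; lra.
  - lra.
Qed.

Lemma poncelet_triangle_rot (o : point) (r : R) (K : conic) (P Q R : point) :
  poncelet_triangle o r K P Q R -> poncelet_triangle o r K Q R P.
Proof.
  intros [Hnd [[HP [HQ HR]] [T1 [T2 T3]]]].
  split; [unfold nondegenerate, collinear, cross in *; lra|].
  split; [split; [|split]|split; [|split]]; assumption.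
Qed.

Lemma poncelet_triangle_swap (o : point) (r : R) (K : conic) (P Q R : point) :
  poncelet_triangle o r K P Q R -> poncelet_triangle o r K Q P R.
Proof.
  intros [Hnd [[HP [HQ HR]] [T1 [T2 T3]]]].
  split; [unfold nondegenerate, collinear, cross in *; lra|].
  split; [split; [|split]|split; [|split]]; try assumption; now apply line_tangent_sym.
Qed.

Lemma poncelet_right_hypotenuse (o : point) (r : R) (K : conic) (P Q R : point) :
  poncelet_triangle o r K P Q R -> dot R P Q = 0 -> is_midpoint o P Q.
Proof.
  intros HPQR Hd.
  destruct (poncelet_triangle_rot o r K Q R P (poncelet_triangle_rot o r K P Q R HPQR))
    as [Hnd [[HR [HP HQ]] _]].
  exact (thales_midpoint o r R P Q HR HP HQ Hd Hnd).
Qed.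

Lemma right_poncelet_triangle_diameter (o : point) (r : R) (K : conic) (A B C : point) :
  poncelet_triangle o r K A B C -> right_triangle A B C ->
  exists P Q R, same_triangle A B C P Q R /\ poncelet_triangle o r K P Q R /\
                is_midpoint o P Q.
Proof.
  intros HABC [Hd | [Hd | Hd]].
  - pose proof (poncelet_triangle_rot o r K A B C HABC) as HBCA.
    exists B, C, A; split; [intro X; tauto|].
    split; [exact HBCA | exact (poncelet_right_hypotenuse o r K B C A HBCA Hd)].
  - pose proof (poncelet_triangle_rot o r K B C A (poncelet_triangle_rot o r K A B C HABC))
      as HCAB.
    exists C, A, B; split; [intro X; tauto|].
    split; [exact HCAB | exact (poncelet_right_hypotenuse o r K C A B HCAB Hd)].
  - exists A, B, C; split; [intro X; tauto|].
    split; [exact HABC | exact (poncelet_right_hypotenuse o r K A B C HABC Hd)].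
Qed.

Lemma poncelet_diameter_disc (o : point) (r : R) (K : conic) (P Q R : point) :
  poncelet_triangle o r K P Q R -> is_midpoint o P Q ->
  tangent_disc K o (px Q - px P) (py Q - py P) = 0.
Proof.
  intros [_ [_ [HPQ _]]] HM.
  exact (line_tangent_disc K P Q o HPQ (midpoint_collinear o P Q HM)).
Qed.

Lemma poncelet_third_vertex_unique (o : point) (r : R) (K : conic) (P Q R R' : point) :
  ca K * cd K - cb K ^ 2 <> 0 ->
  poncelet_triangle o r K P Q R -> poncelet_triangle o r K P Q R' -> R = R'.
Proof.
  intros Hdet [Hnd [[HP [_ HR]] [TPQ [_ TRP]]]] [Hnd' [[_ [_ HR']] [_ [_ TR'P]]]].
  assert (Hself : forall S, collinear P S P) by (intro S; unfold collinear, cross; ring).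
  destruct (tangent_disc_three_zeros K P _ _ _ _ _ _ Hdet
              (line_tangent_disc K P Q P TPQ (Hself Q))
              (line_tangent_disc K P R P (line_tangent_sym K R P TRP) (Hself R))
              (line_tangent_disc K P R' P (line_tangent_sym K R' P TR'P) (Hself R')))
    as [Hc | [Hc | Hc]].
  - contradiction.
  - contradiction.
  - apply (circle_secant_unique o r P R R' HP HR HR'); [| | exact Hc];
      intro E; subst; [apply Hnd | apply Hnd']; unfold collinear, cross; ring.
Qed.

Lemma poncelet_parallel_diameters_same (o : point) (r : R) (K : conic)
    (P Q R P' Q' R' : point) :
  ca K * cd K - cb K ^ 2 <> 0 ->
  poncelet_triangle o r K P Q R -> is_midpoint o P Q ->
  poncelet_triangle o r K P' Q' R' -> is_midpoint o P' Q' ->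
  (px Q - px P) * (py Q' - py P') - (py Q - py P) * (px Q' - px P') = 0 ->
  same_triangle P Q R P' Q' R'.
Proof.
  intros Hdet HPQR HM HPQR' HM' Hpar.
  pose proof HPQR as (_ & (_ & HQ & _) & _).
  pose proof HPQR' as (_ & (HP' & _) & _).
  destruct (circle_parallel_diameters o r P Q P' Q' HQ HP' HM HM' Hpar)
    as [[-> ->] | [-> ->]].
  - rewrite (poncelet_third_vertex_unique o r K P Q R R' Hdet HPQR HPQR').
    intro X; tauto.
  - rewrite (poncelet_third_vertex_unique o r K P Q R R' Hdet HPQR
               (poncelet_triangle_swap o r K Q P R' HPQR')).
    intro X; tauto.
Qed.

Lemma same_triangle_transport (A B C P Q R A' B' C' P' Q' R' : point) :
  same_triangle A B C P Q R -> same_triangle A' B' C' P' Q' R' ->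
  same_triangle P Q R P' Q' R' -> same_triangle A B C A' B' C'.
Proof. intros H H' E X; rewrite (H X), (E X), (H' X); reflexivity. Qed.

Theorem proposition2p1 (o : point) (r : R) (K : conic) :
  r > 0 ->
  central_conic K ->
  (exists A B C : point, poncelet_triangle o r K A B C) ->
  forall A1 B1 C1 A2 B2 C2 A3 B3 C3 : point,
    poncelet_triangle o r K A1 B1 C1 -> right_triangle A1 B1 C1 ->
    poncelet_triangle o r K A2 B2 C2 -> right_triangle A2 B2 C2 ->
    poncelet_triangle o r K A3 B3 C3 -> right_triangle A3 B3 C3 ->
    same_triangle A1 B1 C1 A2 B2 C2 \/
    same_triangle A1 B1 C1 A3 B3 C3 \/
    same_triangle A2 B2 C2 A3 B3 C3.
Proof.
  intros _ Hk _ A1 B1 C1 A2 B2 C2 A3 B3 C3 H1 R1 H2 R2 H3 R3.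
  pose proof (central_conic_det_neq0 K Hk) as Hdet.
  destruct (right_poncelet_triangle_diameter o r K A1 B1 C1 H1 R1)
    as (P1 & Q1 & S1 & E1 & N1 & M1).
  destruct (right_poncelet_triangle_diameter o r K A2 B2 C2 H2 R2)
    as (P2 & Q2 & S2 & E2 & N2 & M2).
  destruct (right_poncelet_triangle_diameter o r K A3 B3 C3 H3 R3)
    as (P3 & Q3 & S3 & E3 & N3 & M3).
  destruct (tangent_disc_three_zeros K o _ _ _ _ _ _ Hdet
              (poncelet_diameter_disc o r K P1 Q1 S1 N1 M1)
              (poncelet_diameter_disc o r K P2 Q2 S2 N2 M2)
              (poncelet_diameter_disc o r K P3 Q3 S3 N3 M3)) as [C | [C | C]].
  - left; apply (same_triangle_transport _ _ _ _ _ _ _ _ _ _ _ _ E1 E2).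
    exact (poncelet_parallel_diameters_same o r K _ _ _ _ _ _ Hdet N1 M1 N2 M2 C).
  - right; left; apply (same_triangle_transport _ _ _ _ _ _ _ _ _ _ _ _ E1 E3).
    exact (poncelet_parallel_diameters_same o r K _ _ _ _ _ _ Hdet N1 M1 N3 M3 C).
  - right; right; apply (same_triangle_transport _ _ _ _ _ _ _ _ _ _ _ _ E2 E3).
    exact (poncelet_parallel_diameters_same o r K _ _ _ _ _ _ Hdet N2 M2 N3 M3 C).
Qed.
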